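(* Consider the system $x(k+1)=Ax(k)+Bu(k)$ with $A\in\mathbb{R}^{n\times n}$, $B\in\mathbb{R}^{n\times m}$ and $(A,B)$ controllable. Let $\{u_i^{[0,T_i-1]},x_i^{[0,T_i-1]}\}_{i=1}^p$ be $p$ input-state trajectories of this system (i.e. $x_i(k+1)=Ax_i(k)+Bu_i(k)$). Let $L\ge1$ and let $\alpha_1,\dots,\alpha_p$ be any nonzero real weights (used in all matrices below). 1) If $T_1=\dots=T_p=T_0$ and $\{u_i^{[0,T_0-1]}\}_{i=1}^p$ are CCPE of order $L+n$, then $\operatorname{rank}\begin{bmatrix}H_1^{cum}(\{x_i^{[0,T_0-L]}\}_{i=1}^p)\\ H_L^{cum}(\{u_i^{[0,T_0-1]}\}_{i=1}^p)\end{bmatrix}=n+mL$. 2) If $\{u_i^{[0,T_i-1]}\}_{i=1}^p$ are MCPE of order $L+n$, then $\operatorname{rank}\begin{bmatrix}H_1^{mos}(\{x_i^{[0,T_i-L]}\}_{i=1}^p)\\ H_L^{mos}(\{u_i^{[0,T_i-1]}\}_{i=1}^p)\end{bmatrix}=n+mL$. 3) If $T_1=\dots=T_{\bar p}=T_0$ and $\{u_i^{[0,T_i-1]}\}_{i=1}^p$ are HCPE of order $L+n$ (cumulative part $u_1,\dots,u_{\bar p}$, mosaic part $u_{\bar p+1},\dots,u_p$), then $\operatorname{rank}\begin{bmatrix}H_1^{hyb}(\{x_i^{[0,T_i-L]}\}_{i=1}^p)\\ H_L^{hyb}(\{u_i^{[0,T_i-1]}\}_{i=1}^p)\end{bmat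rix}=n+mL$.
   Context: For a sequence $z^{[a,b]}=(z(a),\dots,z(b))$ with $z(k)\in\mathbb{R}^q$ and $L\le b-a+1$, the block Hankel matrix $H_L(z^{[a,b]})\in\mathbb{R}^{qL\times(b-a-L+2)}$ has $(r,c)$ block entry $z(a+r+c)$. With nonzero weights $\alpha_i$: $H_L^{mos}(\{z_i^{[a,b_i]}\}_{i=1}^p)=[\alpha_1H_L(z_1^{[a,b_1]})\ \cdots\ \alpha_pH_L(z_p^{[a,b_p]})]$; for equal-length sequences $H_L^{cum}(\{z_i^{[a,b]}\}_{i=1}^p)=\sum_i\alpha_iH_L(z_i^{[a,b]})$; and $H_L^{hyb}(\{z_i\}_{i=1}^p)=[H_L^{cum}(\{z_i\}_{i=1}^{\bar p})\ \ H_L^{mos}(\{z_i\}_{i=\bar p+1}^p)]$ where $z_1,\dots,z_{\bar p}$ have equal lengths. Signals $u_i\in\mathbb{R}^m$ are MCPE (resp. CCPE, HCPE) of order $K$ if $H_K^{mos}$ (resp. $H_K^{cum}$, $H_K^{hyb}$) of the sequences has full row rank $mK$ for every choice of nonzero weights $\alpha_i$. *)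

From HB Require Import structures.
From mathcomp Require Import all_boot all_order all_algebra.
From mathcomp Require Export reals.
Set Implicit Arguments. Unset Strict Implicit. Unset Printing Implicit Defensive.
Import Order.TTheory GRing.Theory Num.Theory.
Local Open Scope ring_scope.

Lemma ltn_mod_ord (K q : nat) (i : 'I_(K * q)) : (i %% q < q)%N.
Proof.
case: q i => [|q] i; last by rewrite ltn_mod.
by case: i => /= i; rewrite muln0.
Qed.

Definition ord_mod (K q : nat) (i : 'I_(K * q)) : 'I_q := Ordinal (ltn_mod_ord i).

Section Defs.
Variable R : realType.

(* Block Hankel matrix of depth K with N columns of a sequence z with values
   in R^q : size (K q) x N, (r,c) block entry z(r + c) (row index i = r*q + j is
   the j-th coordinate of block r).  For a sequence z^{[0,T-1]} of length T the
   paper's H_K(z^{[0,T-1]}) is  hankel K (T - K + 1) z  (T - K + 1 = number of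
   columns b - a - K + 2 with a = 0, b = T - 1). *)
Definition hankel (q K N : nat) (z : nat -> 'cV[R]_q) : 'M[R]_(K * q, N) :=
  \matrix_(i, c) z (i %/ q + c)%N (ord_mod i) 0.

Definition Hmos (q K p : nat) (alpha : 'I_p -> R) (N : 'I_p -> nat)
  (z : 'I_p -> nat -> 'cV[R]_q) : 'M[R]_(K * q, \sum_(i < p) N i) :=
  mxrow (fun i => alpha i *: hankel K (N i) (z i)).

Definition Hcum (q K p : nat) (alpha : 'I_p -> R) (N0 : nat)
  (z : 'I_p -> nat -> 'cV[R]_q) : 'M[R]_(K * q, N0) :=
  \sum_(i < p) alpha i *: hankel K N0 (z i).

(* Hybrid Hankel matrix: the first pb sequences (indices lshift) form the
   cumulative part (common column count N0), the last pm ones (indices rshift)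
   the mosaic part (column counts N). *)
Definition Hhyb (q K pb pm : nat) (alpha : 'I_(pb + pm) -> R) (N0 : nat)
  (N : 'I_(pb + pm) -> nat) (z : 'I_(pb + pm) -> nat -> 'cV[R]_q) :=
  row_mx (Hcum K (fun i => alpha (lshift pm i)) N0 (fun i => z (lshift pm i)))
         (Hmos K (fun i => alpha (rshift pb i)) (fun i => N (rshift pb i))
                 (fun i => z (rshift pb i))).

Definition MCPE (q p : nat) (T : 'I_p -> nat) (u : 'I_p -> nat -> 'cV[R]_q) (K : nat) :=
  forall alpha : 'I_p -> R, (forall i, alpha i != 0) ->
    row_free (Hmos K alpha (fun i => T i - K + 1)%N u).

Definition CCPE (q p : nat) (T0 : nat) (u : 'I_p -> nat -> 'cV[R]_q) (K : nat) :=
  forall alpha : 'I_p -> R, (forall i, alpha i != 0) ->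
    row_free (Hcum K alpha (T0 - K + 1) u).

Definition HCPE (q pb pm : nat) (T0 : nat) (T : 'I_(pb + pm) -> nat)
  (u : 'I_(pb + pm) -> nat -> 'cV[R]_q) (K : nat) :=
  forall alpha : 'I_(pb + pm) -> R, (forall i, alpha i != 0) ->
    row_free (Hhyb K alpha (T0 - K + 1) (fun i => T i - K + 1)%N u).

Definition ctrb_mx (n m : nat) (A : 'M[R]_n) (B : 'M[R]_(n, m)) : 'M[R]_(n, n * m) :=
  \matrix_(i, j) (A ^+ (j %/ m) *m B) i (ord_mod j).

Definition controllable (n m : nat) (A : 'M[R]_n) (B : 'M[R]_(n, m)) :=
  \rank (ctrb_mx A B) = n.

Definition is_traj (n m : nat) (A : 'M[R]_n) (B : 'M[R]_(n, m)) (T : nat)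
  (u : nat -> 'cV[R]_m) (x : nat -> 'cV[R]_n) :=
  forall k, (k.+1 < T)%N -> x k.+1 = A *m x k + B *m u k.

End Defs.

From HB Require Import structures.
From mathcomp Require Import all_boot all_order all_algebra.
From mathcomp Require Import reals.
From mathcomp Require Import zify.
Set Implicit Arguments. Unset Strict Implicit. Unset Printing Implicit Defensive.
Import Order.TTheory GRing.Theory Num.Theory.
Local Open Scope ring_scope.

(* Let w = [xi eta_0 ... eta_(L-1)] annihilate the data matrix. Each window of
   L + n consecutive samples of a trajectory gives, for every shift s <= n, the
   relation xi A^s x(c) + sum_k e(k + n - s) u(c + k) = 0, where x(c + s) has
   been expanded from x(c) and e = (xi A^(n-1) B, ..., xi B, eta_0, ...,
   eta_(L-1), 0, 0, ...) does not depend on s. Summing these relations with the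
   coefficients P_s of the characteristic polynomial of A kills the state term
   (Cayley-Hamilton), so persistency of excitation of order L + n yields
   sum_s P_s e(k + n - s) = 0 for k < L + n. As P is monic, this recurrence run
   backwards from the zero tail of e gives e = 0: hence eta = 0 and
   xi A^k B = 0 for k < n, i.e. xi = 0 by controllability.
   The cumulative, mosaic and hybrid matrices only differ in the windows they
   provide: a weighted sum of trajectories is a trajectory, and a block scaled
   by a nonzero weight has the same left kernel. *)

Section FlatIndex.
Variables K q : nat.

Lemma flat_subproof (k : 'I_K) (j : 'I_q) : (k * q + j < K * q)%N.
Proof.
case: k j => k hk [j hj] /=.
have : (k.+1 * q <= K * q)%N by rewrite leq_mul2r hk orbT.
rewrite mulSn; lia.
Qed.

Definition flat (k : 'I_K) (j : 'I_q) : 'I_(K * q) := Ordinal (flat_subproof k j).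

Lemma flat_divq k j : (flat k j %/ q)%N = k.
Proof.
case: j => j hj /=; have q_gt0 : (0 < q)%N by case: q hj.
by rewrite divnMDl // divn_small // addn0.
Qed.

Lemma ord_mod_flat k j : ord_mod (flat k j) = j.
Proof. by apply: val_inj; case: j => j hj /=; rewrite modnMDl modn_small. Qed.

Variant flat_spec : 'I_(K * q) -> Type := FlatSpec k j : flat_spec (flat k j).

Lemma flatP i : flat_spec i.
Proof.
have q_gt0 : (0 < q)%N by case: q i => [|//] [i]; rewrite muln0.
have i_lt : (i %/ q < K)%N by rewrite ltn_divLR.
have -> : i = flat (Ordinal i_lt) (ord_mod i).
  by apply: val_inj; rewrite /= {1}(divn_eq i q).
exact: FlatSpec.
Qed.

Lemma big_flat (V : nmodType) (G : 'I_(K * q) -> V) :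
  \sum_i G i = \sum_(k < K) \sum_(j < q) G (flat k j).
Proof.
have flat_inj : injective (fun kj : 'I_K * 'I_q => flat kj.1 kj.2).
  move=> [k j] [k' j'] /= e; congr pair.
    by apply: val_inj; rewrite /= -(flat_divq k j) e flat_divq.
  by rewrite -(ord_mod_flat k j) e ord_mod_flat.
have flat_bij : bijective (fun kj : 'I_K * 'I_q => flat kj.1 kj.2).
  by apply: inj_card_bij; rewrite // card_prod !card_ord.
by rewrite pair_big (reindex _ (onW_bij _ flat_bij)).
Qed.

End FlatIndex.

Section RowBlocks.
Variable V : nmodType.

(* Zero when [r >= K]. *)
Definition row_block (K q : nat) (v : 'rV[V]_(K * q)) (r : nat) : 'rV[V]_q :=
  \row_j oapp (v 0) 0 (insub (r * q + j)%N).

Definition blocks_row (K q : nat) (y : nat -> 'rV[V]_q) : 'rV[V]_(K * q) :=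
  \row_i y (i %/ q)%N 0 (ord_mod i).

Lemma row_block_flat (K q : nat) (v : 'rV[V]_(K * q)) (k : 'I_K) :
  row_block v k = \row_j v 0 (flat k j).
Proof.
apply/rowP => j; rewrite !mxE insubT ?flat_subproof // => kj_lt; congr (v 0 _); exact: val_inj.
Qed.

Lemma row_block_blocks_row (K q : nat) (y : nat -> 'rV[V]_q) (k : 'I_K) :
  row_block (blocks_row K y) k = y k.
Proof. by apply/rowP => j; rewrite row_block_flat !mxE flat_divq ord_mod_flat. Qed.

Lemma row_blocks_eq0 (K q : nat) (v : 'rV[V]_(K * q)) :
  (forall k, (k < K)%N -> row_block v k = 0) -> v = 0.
Proof.
move=> v_blocks; apply/rowP => i; case: (flatP i) => k j.
by have /rowP/(_ j) := v_blocks k (ltn_ord k); rewrite row_block_flat !mxE.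
Qed.

End RowBlocks.

Lemma row_free_blocks_row_eq0 (F : fieldType) (K q N : nat) (M : 'M[F]_(K * q, N))
    (y : nat -> 'rV[F]_q) :
  row_free M -> blocks_row K y *m M = 0 -> forall k, (k < K)%N -> y k = 0.
Proof.
move=> /mulmx_free_eq0 M_free /eqP; rewrite M_free => /eqP y0 k k_lt.
rewrite -(row_block_blocks_row y (Ordinal k_lt)) y0 row_block_flat.
by apply/rowP => j; rewrite !mxE.
Qed.

Section HankelProducts.
Variable R : realType.

Lemma mul_hankel (K q N : nat) (v : 'rV[R]_(K * q)) (z : nat -> 'cV[R]_q) (c : 'I_N) :
  (v *m hankel K N z) 0 c = (\sum_(k < K) row_block v k *m z (k + c)%N) 0 0.
Proof.
rewrite mxE big_flat summxE; apply: eq_bigr => k _.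
rewrite row_block_flat mxE; apply: eq_bigr => j _.
by rewrite !mxE flat_divq ord_mod_flat.
Qed.

Lemma blocks_row_mul_hankel_eq0 (K q N : nat) (y : nat -> 'rV[R]_q) (z : nat -> 'cV[R]_q) :
  (forall c, (c < N)%N -> \sum_(k < K) y k *m z (k + c)%N = 0) ->
  blocks_row K y *m hankel K N z = 0.
Proof.
move=> windows0; apply/rowP => c; rewrite mul_hankel.
under eq_bigr do rewrite row_block_blocks_row.
by rewrite windows0 // !mxE.
Qed.

Definition wsum (q p : nat) (alpha : 'I_p -> R) (z : 'I_p -> nat -> 'cV[R]_q) (t : nat)
    : 'cV[R]_q :=
  \sum_i alpha i *: z i t.

Lemma Hcum_hankel (q K p N : nat) (alpha : 'I_p -> R) (z : 'I_p -> nat -> 'cV[R]_q) :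
  Hcum K alpha N z = hankel K N (wsum alpha z).
Proof.
apply/matrixP => i j; rewrite /Hcum summxE !mxE summxE.
by apply: eq_bigr => k _; rewrite !mxE.
Qed.

Lemma mulmx_Hmos (q K p r : nat) (alpha : 'I_p -> R) (N : 'I_p -> nat)
    (z : 'I_p -> nat -> 'cV[R]_q) (w : 'M[R]_(r, K * q)) :
  w *m Hmos K alpha N z = \mxrow_i (alpha i *: (w *m hankel K (N i) (z i))).
Proof. by rewrite mul_mxrow; apply/mxrowP => i; rewrite !mxrowK scalemxAr. Qed.

Lemma is_traj_wsum (n m p T : nat) (A : 'M[R]_n) (B : 'M[R]_(n, m)) (alpha : 'I_p -> R)
    (u : 'I_p -> nat -> 'cV[R]_m) (x : 'I_p -> nat -> 'cV[R]_n) :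
  (forall i, is_traj A B T (u i) (x i)) -> is_traj A B T (wsum alpha u) (wsum alpha x).
Proof.
move=> traj k k_lt; rewrite /wsum !mulmx_sumr -big_split; apply: eq_bigr => i _.
by rewrite traj // scalerDr -!scalemxAr.
Qed.

End HankelProducts.

Lemma Cayley_Hamilton_coefs (R : comNzRingType) (n : nat) (A : 'M[R]_n) :
  exists2 P : {poly R}, P`_n = 1 & \sum_(s < n.+1) P`_s *: A ^+ s = 0.
Proof.
case: n A => [|n] A.
  by exists 1; [rewrite coefC | apply/matrixP => -[]].
have chA_monic := char_poly_monic A.
exists (char_poly A).
  by move/monicP: chA_monic; rewrite /lead_coef size_char_poly.
have := Cayley_Hamilton A.
rewrite /horner_mx /horner_morph (@horner_coef_wide _ (size (char_poly A))); last first.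
  by rewrite size_map_poly_id0 // (monicP chA_monic) -[_%:M]/(1 : 'M_n.+1) oner_eq0.
rewrite size_char_poly => CH; rewrite -[RHS]CH; apply: eq_bigr => i _.
by rewrite coef_map /= -mul_scalar_mx.
Qed.

Lemma backward_recurrence_eq0 (R : pzRingType) (V : lmodType R) (c : nat -> R)
    (d N : nat) (e : nat -> V) :
  c d = 1 -> (forall t, (N <= t)%N -> e t = 0) ->
  (forall k, (k < N)%N -> \sum_(s < d.+1) c s *: e (k + d - s)%N = 0) ->
  forall t, e t = 0.
Proof.
move=> cd1 tail0 rec.
suff e0 j : forall t, (N - j <= t)%N -> e t = 0 by move=> t; apply: (e0 N); lia.
elim: j => [|j IHj] t t_ge; first by apply: tail0; lia.
have [|t_lt] := leqP (N - j) t; first exact: IHj.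
have := rec t (leq_trans t_lt (leq_subr _ _)).
rewrite big_ord_recr /= cd1 scale1r addnK big1 ?add0r // => s _.
by rewrite IHj ?scaler0 //; have := ltn_ord s; lia.
Qed.

Section WindowArgument.
Variables (R : comNzRingType) (n m L : nat) (A : 'M[R]_n) (B : 'M[R]_(n, m)).

Lemma state_expansion (x : nat -> 'cV[R]_n) (u : nat -> 'cV[R]_m) (S : nat) :
  (forall s, (s < S)%N -> x s.+1 = A *m x s + B *m u s) ->
  forall s, (s <= S)%N ->
  x s = A ^+ s *m x 0%N + \sum_(t < s) A ^+ (s - t.+1) *m B *m u t.
Proof.
move=> traj; have AX k : A *m A ^+ k = A ^+ k.+1 by rewrite exprS.
elim=> [|s IHs] s_le; first by rewrite expr0 mul1mx big_ord0 addr0.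
rewrite traj // IHs 1?ltnW // big_ord_recr /= subnn expr0 mul1mx.
rewrite mulmxDr mulmxA AX mulmx_sumr addrA; congr (_ + _ + _).
by apply: eq_bigr => t _; rewrite !mulmxA AX subSn.
Qed.

Variables (xi : 'rV[R]_n) (eta : nat -> 'rV[R]_m).

(* Column c + s of the data matrix, with x(c + s) expanded from x(c), weighs
   u(c + s - n + t) by [input_weight t], whatever the shift s <= n. *)
Definition input_weight (t : nat) : 'rV[R]_m :=
  if (t < n)%N then xi *m A ^+ (n - t.+1) *m B
  else if (t < n + L)%N then eta (t - n) else 0.

Lemma input_weight_shift (s k : nat) : (s <= n)%N ->
  input_weight (k + n - s) =
    if (k < s)%N then xi *m A ^+ (s - k.+1) *m B
    else if (k < s + L)%N then eta (k - s) else 0.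
Proof.
move=> s_le; rewrite /input_weight; case: (ltnP k s) => k_s.
  by rewrite ifT; [congr (_ *m A ^+ _ *m _); lia | lia].
rewrite ifF; last by apply/negbTE; lia.
rewrite (_ : (k + n - s < n + L)%N = (k < s + L)%N); last by lia.
by congr (if _ then eta _ else _); lia.
Qed.

Lemma window_identity (x : nat -> 'cV[R]_n) (u : nat -> 'cV[R]_m) :
  (forall s, (s < n)%N -> x s.+1 = A *m x s + B *m u s) ->
  (forall s, (s <= n)%N -> xi *m x s + \sum_(r < L) eta r *m u (r + s)%N = 0) ->
  forall s, (s <= n)%N ->
  xi *m A ^+ s *m x 0%N + \sum_(k < L + n) input_weight (k + n - s) *m u k = 0.
Proof.
move=> traj ker s s_le; rewrite -[RHS](ker s s_le) (state_expansion traj s_le).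
rewrite mulmxDr mulmxA -addrA; congr (_ + _).
rewrite -(big_mkord xpredT (fun k => input_weight (k + n - s) *m u k)).
rewrite (big_cat_nat (n := s)) //=; last by lia.
rewrite (big_cat_nat (m := s) (n := s + L)) ?leq_addr //=; last by lia.
rewrite [X in _ + (_ + X)]big1_seq ?addr0; last first.
  move=> k /andP[_]; rewrite mem_index_iota => /andP[k_ge k_lt].
  by rewrite input_weight_shift // ifF ?ifF ?mul0mx //; apply/negbTE; lia.
congr (_ + _).
  rewrite big_mkord mulmx_sumr; apply: eq_bigr => t _.
  by rewrite input_weight_shift // ltn_ord !mulmxA.
rewrite (big_addn 0 _ s) addKn big_mkord; apply: eq_bigr => r _.
rewrite input_weight_shift // ifF; last by apply/negbTE; lia.
have r_lt := ltn_ord r; rewrite ifT; [by rewrite addnK | lia].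
Qed.

Variables (C : Type) (x : C -> nat -> 'cV[R]_n) (u : C -> nat -> 'cV[R]_m).
Hypothesis window_traj : forall c s, (s < n)%N -> x c s.+1 = A *m x c s + B *m u c s.
Hypothesis window_ker : forall c s, (s <= n)%N ->
  xi *m x c s + \sum_(r < L) eta r *m u c (r + s)%N = 0.
Hypothesis window_pe : forall y : nat -> 'rV[R]_m,
  (forall c, \sum_(k < L + n) y k *m u c k = 0) -> forall k, (k < L + n)%N -> y k = 0.

Lemma input_weight_eq0 t : input_weight t = 0.
Proof.
have [P Pn PA] := Cayley_Hamilton_coefs A.
apply: (backward_recurrence_eq0 (c := fun s => P`_s) (N := L + n)) Pn _ _ t.
  by move=> t' t'_ge; rewrite /input_weight ifF ?ifF //; apply/negbTE; lia.
apply: window_pe => c.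
have identity (s : 'I_n.+1) :
    \sum_(k < L + n) input_weight (k + n - s) *m u c k = - (xi *m A ^+ s *m x c 0%N).
  apply/eqP; rewrite -addr_eq0 addrC; apply/eqP.
  by apply: (window_identity (window_traj c) (window_ker c)); rewrite -ltnS.
under eq_bigr do rewrite mulmx_suml.
rewrite exchange_big /=.
under eq_bigr => s _ do (under eq_bigr do rewrite -scalemxAl; rewrite -scaler_sumr identity).
transitivity (- (xi *m (\sum_(s < n.+1) P`_s *: A ^+ s) *m x c 0%N)).
  rewrite mulmx_sumr mulmx_suml -sumrN; apply: eq_bigr => s _.
  by rewrite scalerN -scalemxAr -scalemxAl.
by rewrite PA mulmx0 mul0mx oppr0.
Qed.

Lemma eta_eq0 r : (r < L)%N -> eta r = 0.
Proof.
move=> r_lt; rewrite -(input_weight_eq0 (r + n)) /input_weight ifF; last by apply/negbTE; lia.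
by rewrite ifT ?addnK //; lia.
Qed.

Lemma xi_ctrb_eq0 k : (k < n)%N -> xi *m A ^+ k *m B = 0.
Proof.
move=> k_lt; rewrite -(input_weight_eq0 (n - k.+1)) /input_weight ifT; last by lia.
by congr (_ *m A ^+ _ *m _); lia.
Qed.

End WindowArgument.

Lemma controllable_row_eq0 (R : realType) (n m : nat) (A : 'M[R]_n) (B : 'M[R]_(n, m))
    (xi : 'rV[R]_n) :
  controllable A B -> (forall k, (k < n)%N -> xi *m A ^+ k *m B = 0) -> xi = 0.
Proof.
move=> ctrl xiAB0; have ctrb_free : row_free (ctrb_mx A B) by apply/eqP.
apply/eqP; rewrite -(mulmx_free_eq0 _ ctrb_free).
apply/eqP/rowP => j; have m_gt0 : (0 < m)%N by case: (posnP m) j => [-> [j]|]; rewrite ?muln0.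
have j_lt : (j %/ m < n)%N by rewrite ltn_divLR.
transitivity ((xi *m (A ^+ (j %/ m) *m B)) 0 (ord_mod j)).
  by rewrite !mxE; apply: eq_bigr => i _; rewrite !mxE.
by rewrite mulmxA xiAB0 // !mxE.
Qed.

Section DataMatrix.
Variables (R : realType) (n m L : nat) (A : 'M[R]_n) (B : 'M[R]_(n, m)).

Definition data_xi (w : 'rV[R]_(1 * n + L * m)) : 'rV[R]_n := row_block (lsubmx w) 0.
Definition data_eta (w : 'rV[R]_(1 * n + L * m)) : nat -> 'rV[R]_m := row_block (rsubmx w).

Lemma mul_data_col (w : 'rV[R]_(1 * n + L * m)) (N : nat) (X : nat -> 'cV[R]_n)
    (U : nat -> 'cV[R]_m) (c : 'I_N) :
  (w *m col_mx (hankel 1 N X) (hankel L N U)) 0 c =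
  (data_xi w *m X c + \sum_(r < L) data_eta w r *m U (r + c)%N) 0 0.
Proof. by rewrite -{1}(hsubmxK w) mul_row_col [LHS]mxE !mul_hankel big_ord1 [RHS]mxE. Qed.

Lemma data_ker_col (w : 'rV[R]_(1 * n + L * m)) (N : nat) X U :
  w *m col_mx (hankel 1 N X) (hankel L N U) = 0 -> forall c, (c < N)%N ->
  data_xi w *m X c + \sum_(r < L) data_eta w r *m U (r + c)%N = 0.
Proof.
move=> w_ker c c_lt; apply/rowP => i; rewrite ord1 -(mul_data_col _ _ _ (Ordinal c_lt)).
by rewrite w_ker !mxE.
Qed.

Lemma data_row_eq0 (w : 'rV[R]_(1 * n + L * m)) :
  data_xi w = 0 -> (forall r, (r < L)%N -> data_eta w r = 0) -> w = 0.
Proof.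
move=> xi0 eta0; rewrite -(hsubmxK w) (row_blocks_eq0 eta0).
by rewrite (@row_blocks_eq0 _ 1 n (lsubmx w)) ?row_mx0 // => -[] // _; exact: xi0.
Qed.

Lemma Hmos_data_ker (p : nat) (alpha : 'I_p -> R) (N : 'I_p -> nat)
    (x : 'I_p -> nat -> 'cV[R]_n) (u : 'I_p -> nat -> 'cV[R]_m) (w : 'rV[R]_(1 * n + L * m)) :
  (forall i, alpha i != 0) -> w *m col_mx (Hmos 1 alpha N x) (Hmos L alpha N u) = 0 ->
  forall i, w *m col_mx (hankel 1 (N i) (x i)) (hankel L (N i) (u i)) = 0.
Proof.
move=> alpha_neq0 + i; rewrite -{1}(hsubmxK w) mul_row_col !mulmx_Hmos -mxrowD.
move=> /(congr1 (fun M => submxrow M i)); rewrite mxrowK submxrow0 -scalerDr.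
rewrite -mul_row_col hsubmxK.
by move/eqP; rewrite scaler_eq0 (negbTE (alpha_neq0 i)) => /eqP.
Qed.

Lemma Hhyb_data_ker (pb pm N0 : nat) (alpha : 'I_(pb + pm) -> R) (N : 'I_(pb + pm) -> nat)
    (x : 'I_(pb + pm) -> nat -> 'cV[R]_n) (u : 'I_(pb + pm) -> nat -> 'cV[R]_m)
    (w : 'rV[R]_(1 * n + L * m)) :
  w *m col_mx (Hhyb 1 alpha N0 N x) (Hhyb L alpha N0 N u) = 0 ->
  w *m col_mx (Hcum 1 (fun i => alpha (lshift pm i)) N0 (fun i => x (lshift pm i)))
              (Hcum L (fun i => alpha (lshift pm i)) N0 (fun i => u (lshift pm i))) = 0 /\
  w *m col_mx (Hmos 1 (fun i => alpha (rshift pb i)) (fun i => N (rshift pb i))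
                      (fun i => x (rshift pb i)))
              (Hmos L (fun i => alpha (rshift pb i)) (fun i => N (rshift pb i))
                      (fun i => u (rshift pb i))) = 0.
Proof.
rewrite /Hhyb -[col_mx (row_mx _ _) (row_mx _ _)]/(block_mx _ _ _ _) block_mxEh mul_mx_row.
by move/eqP; rewrite row_mx_eq0 => /andP[/eqP-> /eqP->].
Qed.

Hypotheses (ctrl : controllable A B) (L_gt0 : (0 < L)%N).

Lemma data_rank_full (N : nat) (M : 'M[R]_(1 * n + L * m, N)) :
  (forall w : 'rV[R]_(1 * n + L * m), w *m M = 0 -> w = 0) -> \rank M = (n + m * L)%N.
Proof. by move=> /inj_row_free/eqP->; rewrite mul1n mulnC. Qed.

Lemma data_left_ker_eq0 (C : Type) (x : C -> nat -> 'cV[R]_n) (u : C -> nat -> 'cV[R]_m)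
    (w : 'rV[R]_(1 * n + L * m)) :
  (forall c s, (s < n)%N -> x c s.+1 = A *m x c s + B *m u c s) ->
  (forall c s, (s <= n)%N ->
     data_xi w *m x c s + \sum_(r < L) data_eta w r *m u c (r + s)%N = 0) ->
  (forall y : nat -> 'rV[R]_m,
     (forall c, \sum_(k < L + n) y k *m u c k = 0) -> forall k, (k < L + n)%N -> y k = 0) ->
  w = 0.
Proof.
move=> traj ker pe; apply: data_row_eq0; last exact: eta_eq0 traj ker pe.
by apply: controllable_row_eq0 ctrl _; exact: xi_ctrb_eq0 traj ker pe.
Qed.

Lemma traj_window (T : nat) (X : nat -> 'cV[R]_n) (U : nat -> 'cV[R]_m) c s :
  is_traj A B T U X -> (L + n <= T)%N -> (c < T - (L + n) + 1)%N -> (s < n)%N ->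
  X (s.+1 + c)%N = A *m X (s + c)%N + B *m U (s + c)%N.
Proof. by move=> traj T_ge c_lt s_lt; rewrite addSn traj //; lia. Qed.

Lemma data_ker_window (w : 'rV[R]_(1 * n + L * m)) (T : nat) X U c s :
  w *m col_mx (hankel 1 (T - L + 1) X) (hankel L (T - L + 1) U) = 0 ->
  (L + n <= T)%N -> (c < T - (L + n) + 1)%N -> (s <= n)%N ->
  data_xi w *m X (s + c)%N + \sum_(r < L) data_eta w r *m U (r + s + c)%N = 0.
Proof.
move=> w_ker T_ge c_lt s_le; rewrite -[RHS](data_ker_col w_ker (c := s + c)); last by lia.
by congr (_ + _); apply: eq_bigr => r _; rewrite addnA.
Qed.

(* The bound on T0 is only needed for a nonempty family: an empty one sums to zero. *)
Lemma wsum_windows (p T0 : nat) (alpha : 'I_p -> R) (u : 'I_p -> nat -> 'cV[R]_m)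
    (x : 'I_p -> nat -> 'cV[R]_n) (w : 'rV[R]_(1 * n + L * m)) :
  (forall i, is_traj A B T0 (u i) (x i)) -> ((0 < p)%N -> (L + n <= T0)%N) ->
  w *m col_mx (Hcum 1 alpha (T0 - L + 1) x) (Hcum L alpha (T0 - L + 1) u) = 0 ->
  forall c : 'I_(T0 - (L + n) + 1),
  (forall s, (s < n)%N -> wsum alpha x (s.+1 + c)%N =
     A *m wsum alpha x (s + c)%N + B *m wsum alpha u (s + c)%N) /\
  (forall s, (s <= n)%N -> data_xi w *m wsum alpha x (s + c)%N +
     \sum_(r < L) data_eta w r *m wsum alpha u (r + s + c)%N = 0).
Proof.
move=> traj T0_ge; rewrite !Hcum_hankel => w_ker c.
have [p0 | p_gt0] := posnP p.
  have wsum0 (q : nat) (z : 'I_p -> nat -> 'cV[R]_q) t : wsum alpha z t = 0.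
    by rewrite /wsum big1 // => i; have := ltn_ord i; rewrite {2}p0.
  split=> s _; first by rewrite !wsum0 !mulmx0 addr0.
  by rewrite wsum0 mulmx0 add0r big1 // => r _; rewrite wsum0 mulmx0.
split=> s; first exact: traj_window (is_traj_wsum alpha traj) (T0_ge p_gt0) (ltn_ord c).
exact: data_ker_window w_ker (T0_ge p_gt0) (ltn_ord c).
Qed.

Lemma data_rank_cum (p T0 : nat) (u : 'I_p -> nat -> 'cV[R]_m) (x : 'I_p -> nat -> 'cV[R]_n) :
  (forall i, is_traj A B T0 (u i) (x i)) -> (L + n <= T0)%N -> CCPE T0 u (L + n) ->
  forall alpha : 'I_p -> R, (forall i, alpha i != 0) ->
  \rank (col_mx (Hcum 1 alpha (T0 - L + 1) x) (Hcum L alpha (T0 - L + 1) u)) = (n + m * L)%N.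
Proof.
move=> traj T0_ge pe alpha alpha_neq0; apply: data_rank_full => w w_ker.
have windows := wsum_windows traj (fun _ => T0_ge) w_ker.
apply: (data_left_ker_eq0 (C := 'I_(T0 - (L + n) + 1))
  (x := fun c s => wsum alpha x (s + c)%N) (u := fun c k => wsum alpha u (k + c)%N)).
- by move=> c; exact: (windows c).1.
- by move=> c; exact: (windows c).2.
- move=> y y_ann; apply: row_free_blocks_row_eq0 (pe alpha alpha_neq0) _.
  rewrite Hcum_hankel; apply: blocks_row_mul_hankel_eq0 => c c_lt.
  exact: y_ann (Ordinal c_lt).
Qed.

Lemma data_rank_mos (p : nat) (T : 'I_p -> nat) (u : 'I_p -> nat -> 'cV[R]_m)
    (x : 'I_p -> nat -> 'cV[R]_n) :
  (forall i, is_traj A B (T i) (u i) (x i)) -> (forall i, L + n <= T i)%N ->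
  MCPE T u (L + n) ->
  forall alpha : 'I_p -> R, (forall i, alpha i != 0) ->
  \rank (col_mx (Hmos 1 alpha (fun i => T i - L + 1)%N x)
                (Hmos L alpha (fun i => T i - L + 1)%N u)) = (n + m * L)%N.
Proof.
move=> traj T_ge pe alpha alpha_neq0; apply: data_rank_full => w w_ker.
have {}w_ker := Hmos_data_ker alpha_neq0 w_ker.
apply: (data_left_ker_eq0 (C := {i : 'I_p & 'I_(T i - (L + n) + 1)})
  (x := fun c s => x (tag c) (s + tagged c)%N) (u := fun c k => u (tag c) (k + tagged c)%N)).
- by move=> [i c] s; exact: traj_window (traj i) (T_ge i) (ltn_ord c).
- by move=> [i c] s; exact: data_ker_window (w_ker i) (T_ge i) (ltn_ord c).
- move=> y y_ann; apply: row_free_blocks_row_eq0 (pe alpha alpha_neq0) _.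
  rewrite mulmx_Hmos -mxrow0; apply/mxrowP => i; rewrite !mxrowK.
  rewrite (blocks_row_mul_hankel_eq0 (N := T i - (L + n) + 1)) ?scaler0 // => c c_lt.
  exact: y_ann (Tagged _ (Ordinal c_lt)).
Qed.

Lemma data_rank_hyb (pb pm T0 : nat) (T : 'I_(pb + pm) -> nat)
    (u : 'I_(pb + pm) -> nat -> 'cV[R]_m) (x : 'I_(pb + pm) -> nat -> 'cV[R]_n) :
  (forall i, is_traj A B (T i) (u i) (x i)) -> (forall i : 'I_pb, T (lshift pm i) = T0) ->
  (forall i, L + n <= T i)%N -> HCPE T0 T u (L + n) ->
  forall alpha : 'I_(pb + pm) -> R, (forall i, alpha i != 0) ->
  \rank (col_mx (Hhyb 1 alpha (T0 - L + 1) (fun i => T i - L + 1)%N x)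
                (Hhyb L alpha (T0 - L + 1) (fun i => T i - L + 1)%N u)) = (n + m * L)%N.
Proof.
move=> traj T_cum T_ge pe alpha alpha_neq0; apply: data_rank_full => w w_ker.
have [w_cum w_mos] := Hhyb_data_ker w_ker.
have {}w_mos := Hmos_data_ker (fun i => alpha_neq0 (rshift pb i)) w_mos.
have traj_cum (i : 'I_pb) : is_traj A B T0 (u (lshift pm i)) (x (lshift pm i)).
  by rewrite -(T_cum i).
have pb_T0 : (0 < pb)%N -> (L + n <= T0)%N.
  by move=> pb_gt0; rewrite -(T_cum (Ordinal pb_gt0)); exact: T_ge.
have cum_window := wsum_windows traj_cum pb_T0 w_cum.
set Xc := wsum _ (fun i => x (lshift pm i)) in cum_window.
set Uc := wsum _ (fun i => u (lshift pm i)) in cum_window.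
apply: (data_left_ker_eq0
  (C := ('I_(T0 - (L + n) + 1) + {i : 'I_pm & 'I_(T (rshift pb i) - (L + n) + 1)})%type)
  (x := fun c s => match c with inl c => Xc (s + c)%N
                   | inr c => x (rshift pb (tag c)) (s + tagged c)%N end)
  (u := fun c k => match c with inl c => Uc (k + c)%N
                   | inr c => u (rshift pb (tag c)) (k + tagged c)%N end)).
- move=> [c|[i c]] s; first exact: (cum_window c).1.
  exact: traj_window (traj _) (T_ge _) (ltn_ord c).
- move=> [c|[i c]] s; first exact: (cum_window c).2.
  exact: data_ker_window (w_mos i) (T_ge _) (ltn_ord c).
- move=> y y_ann; apply: row_free_blocks_row_eq0 (pe alpha alpha_neq0) _.
  rewrite /Hhyb mul_mx_row Hcum_hankel mulmx_Hmos -row_mx0; congr row_mx.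
    by apply: blocks_row_mul_hankel_eq0 => c c_lt; exact: y_ann (inl (Ordinal c_lt)).
  rewrite -mxrow0; apply/mxrowP => i; rewrite !mxrowK.
  rewrite (blocks_row_mul_hankel_eq0 (N := T (rshift pb i) - (L + n) + 1)) ?scaler0 //.
  by move=> c c_lt; exact: y_ann (inr (Tagged _ (Ordinal c_lt))).
Qed.

End DataMatrix.

Theorem lemma1 (R : realType) (n m : nat) (A : 'M[R]_n) (B : 'M[R]_(n, m))
  (hAB : controllable A B) (L : nat) (hL : (1 <= L)%N) :
  (* 1) cumulative *)
  (forall (p T0 : nat) (u : 'I_p -> nat -> 'cV[R]_m) (x : 'I_p -> nat -> 'cV[R]_n),
     (forall i, is_traj A B T0 (u i) (x i)) ->
     (L + n <= T0)%N ->
     CCPE T0 u (L + n) ->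
     forall alpha : 'I_p -> R, (forall i, alpha i != 0) ->
       \rank (col_mx (Hcum 1 alpha (T0 - L + 1) x) (Hcum L alpha (T0 - L + 1) u))
         = (n + m * L)%N) /\
  (* 2) mosaic *)
  (forall (p : nat) (T : 'I_p -> nat) (u : 'I_p -> nat -> 'cV[R]_m)
          (x : 'I_p -> nat -> 'cV[R]_n),
     (forall i, is_traj A B (T i) (u i) (x i)) ->
     (forall i, L + n <= T i)%N ->
     MCPE T u (L + n) ->
     forall alpha : 'I_p -> R, (forall i, alpha i != 0) ->
       \rank (col_mx (Hmos 1 alpha (fun i => T i - L + 1)%N x) (Hmos L alpha (fun i => T i - L + 1)%N u))
         = (n + m * L)%N) /\
  (* 3) hybrid: indices lshift = cumulative part, rshift = mosaic part *)
  (forall (pb pm T0 : nat) (T : 'I_(pb + pm) -> nat)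
          (u : 'I_(pb + pm) -> nat -> 'cV[R]_m) (x : 'I_(pb + pm) -> nat -> 'cV[R]_n),
     (forall i, is_traj A B (T i) (u i) (x i)) ->
     (forall i : 'I_pb, T (lshift pm i) = T0) ->
     (forall i, L + n <= T i)%N ->
     HCPE T0 T u (L + n) ->
     forall alpha : 'I_(pb + pm) -> R, (forall i, alpha i != 0) ->
       \rank (col_mx (Hhyb 1 alpha (T0 - L + 1) (fun i => T i - L + 1)%N x)
                     (Hhyb L alpha (T0 - L + 1) (fun i => T i - L + 1)%N u))
         = (n + m * L)%N).
Proof.
split; first exact: data_rank_cum hAB hL.
split; first exact: data_rank_mos hAB hL.
exact: data_rank_hyb hAB hL.
Qed.
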